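(* Let $n\ge1$, $h>0$, and let $f$ be a real function defined at the points $x_m=mh$, $m=-n,\dots,n$; write $f_m=f(mh)$. Let $P_{2n}$ be the unique polynomial of degree at most $2n$ with $P_{2n}(mh)=f_m$ for $m=-n,\dots,n$. Then $$P_{2n}''(0)=\frac{1}{h^2}\sum_{m=1}^{n}\alpha_m^{(2)}(n)\,(f_m-2f_0+f_{-m}),\qquad\text{where } \alpha_m^{(2)}(n)=\frac{1}{m^2\,\pi_m(n)},\quad \pi_m(n)=\prod_{k=1,\,k\ne m}^{n}\left(1-\frac{m^2}{k^2}\right).$$ *)

From HB Require Import structures.
From mathcomp Require Import all_boot all_order all_algebra.
Set Implicit Arguments. Unset Strict Implicit. Unset Printing Implicit Defensive.
Import Order.TTheory GRing.Theory Num.Theory.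
Local Open Scope ring_scope.

Definition pi_coef {R : realFieldType} (n m : nat) : R :=
  \prod_(1 <= k < n.+1 | k != m) (1 - (m%:R ^+ 2) / (k%:R ^+ 2)).

Definition alpha2 {R : realFieldType} (n m : nat) : R :=
  1 / ((m%:R ^+ 2) * pi_coef n m).

(* Since the nodes are symmetric, only the even part E of P
   matters: P(x) + P(-x) = 2 E(x^2), and P''(0) = 2 E'(0).  Writing
   E(y) = E(0) + y T(y) with deg T <= n - 1, the second difference
   f_m - 2 f_0 + f_{-m} equals 2 y_m T(y_m) at y_m = (m h)^2, and
   P''(0) = 2 T(0).  Lagrange interpolation of T at the n nodes y_m gives
   T(0) = sum_m T(y_m) L_m(0), and L_m(0) = 1 / pi_m(n). *)

From HB Require Import structures.
From mathcomp Require Import all_boot all_order all_algebra.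
From mathcomp Require Import ring zify.
Set Implicit Arguments. Unset Strict Implicit. Unset Printing Implicit Defensive.
Import Order.TTheory GRing.Theory Num.Theory.
Local Open Scope ring_scope.

Lemma horner0_derivn2 (R : nzRingType) (P : {poly R}) :
  (P^`(2)).[0] = P`_2 *+ 2.
Proof. by rewrite horner_coef0 coef_derivn addn0. Qed.

Section EvenQuotient.
Variable R : comNzRingType.
Implicit Types P Q : {poly R}.

Definition even_quot P := drop_poly 1 (even_poly P).

Lemma horner_drop_poly1 Q y : y * (drop_poly 1 Q).[y] = Q.[y] - Q`_0.
Proof.
rewrite -{2}[Q](poly_take_drop 1) hornerD hornerM hornerX.
have -> : take_poly 1 Q = (Q`_0)%:P.
  by apply/polyP => i; rewrite coef_take_poly coefC; case: i.
by rewrite hornerC mulrC addrC addKr.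
Qed.

Lemma hornerDN_even_poly P x : P.[x] + P.[- x] = 2 * (even_poly P).[x ^+ 2].
Proof.
rewrite -{1 2}[P]poly_even_odd !(hornerD, hornerM, hornerX, horner_comp, hornerXn).
by rewrite mulrNN -expr2; ring.
Qed.

Lemma horner0_even_quot P : (even_quot P).[0] = P`_2.
Proof. by rewrite horner_coef0 coef_drop_poly coef_even_poly. Qed.

Lemma second_diff_even_quot P x :
  P.[x] - 2 * P.[0] + P.[- x] = 2 * (x ^+ 2 * (even_quot P).[x ^+ 2]).
Proof.
rewrite horner_drop_poly1 coef_even_poly -horner_coef0 mulrBr -hornerDN_even_poly.
by ring.
Qed.

Lemma size_even_quot n P :
  (size P <= (2 * n).+1)%N -> (size (even_quot P) <= n)%N.
Proof.
move=> sP; have sE : (size (even_poly P) <= n.+1)%N.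
  by rewrite (even_polyE (s := n.+1)) ?size_poly // -muln2; lia.
by rewrite size_drop_poly; lia.
Qed.

End EvenQuotient.

Section LagrangeAtZero.
Variables (K : fieldType) (n : nat) (x : nat -> K).
Hypotheses (n_gt0 : (0 < n)%N) (x_inj : injective x).

Lemma horner0_lagrange (i : 'I_n) :
  (tnth (n.-lagrange x) i).[0] = \prod_(j < n | j != i) (x j / (x j - x i)).
Proof.
rewrite (lagrangeE n_gt0 x_inj) hornerM hornerC !horner_prod.
rewrite -prodfV -big_split /=; apply: eq_bigr => j ji.
by rewrite !hornerXsubC sub0r -opprB invrN mulrNN mulrC.
Qed.

Lemma lagrange_horner0 (T : {poly K}) : (size T <= n)%N ->
  T.[0] = \sum_(i < n) T.[x i] * \prod_(j < n | j != i) (x j / (x j - x i)).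
Proof.
move=> sT; rewrite {1}(lagrange_gen n_gt0 x_inj sT) horner_sum.
by apply: eq_bigr => i _; rewrite hornerM hornerC horner0_lagrange.
Qed.

End LagrangeAtZero.

Section SquareNodes.
Variables (R : realFieldType) (h : R).
Hypothesis h_neq0 : h != 0.

(* The node y_m = (m h)^2 for m = i + 1, indexed from 0 as Lagrange bases are. *)
Definition sq_node (i : nat) : R := ((i.+1)%:R * h) ^+ 2.

Lemma sq_node_inj : injective sq_node.
Proof.
move=> i j; rewrite /sq_node !exprMn => /mulIf.
rewrite expf_neq0 // => /(_ isT) /eqP.
by rewrite -!natrX eqr_nat eqn_exp2r // eqSS => /eqP.
Qed.

Lemma pi_coef_neq0 n m : pi_coef n m != 0 :> R.
Proof.
rewrite /pi_coef prodf_seq_neq0; apply/allP => k; rewrite mem_index_iota.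
case/andP=> k_gt0 _; apply/implyP => km.
have kn : k%:R != 0 :> R by rewrite pnatr_eq0 -lt0n.
have -> : 1 - m%:R ^+ 2 / k%:R ^+ 2 = (k%:R ^+ 2 - m%:R ^+ 2) / k%:R ^+ 2 :> R.
  by field.
by rewrite mulf_neq0 ?invr_eq0 ?expf_neq0 // subr_eq0 -!natrX eqr_nat eqn_exp2r.
Qed.

Lemma prod_sq_node_lagrange0 n (i : 'I_n) :
  \prod_(j < n | j != i) (sq_node j / (sq_node j - sq_node i)) =
  (pi_coef n i.+1)^-1.
Proof.
rewrite /pi_coef big_add1 /= big_mkord.
rewrite [in RHS](eq_bigl (fun j : 'I_n => j != i)); last by move=> j; rewrite eqSS.
rewrite -prodfV; apply: eq_bigr => j _.
rewrite /sq_node !exprMn -invf_div; congr (_^-1); field.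
by rewrite nat1r pnatr_eq0 h_neq0.
Qed.

End SquareNodes.

Theorem mainTheorem5 (R : realFieldType) (n : nat) (h : R) (f : R -> R)
    (P : {poly R}) :
  (1 <= n)%N -> 0 < h ->
  (size P <= (2 * n).+1)%N ->
  (forall m : int, - (n%:Z) <= m <= n%:Z -> P.[m%:~R * h] = f (m%:~R * h)) ->
  (P^`(2)).[0] =
    h ^- 2 * \sum_(1 <= m < n.+1)
       alpha2 n m * (f (m%:R * h) - 2 * f (0 * h) + f ((- (m%:~R : R)) * h)).
Proof.
move=> n_gt0 h_gt0 sP interp.
have h_neq0 : h != 0 by rewrite gt_eqF.
have f_pos m : (m <= n)%N -> f (m%:R * h) = P.[m%:R * h].
  by move=> mn; rewrite -[m%:R]/(m%:~R) interp //; apply/andP; split; lia.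
have f_neg m : (m <= n)%N -> f (- (m%:~R : R) * h) = P.[- (m%:R * h)].
  by move=> mn; rewrite -mulNr -intrN interp //; apply/andP; split; lia.
have f_zero : f (0 * h) = P.[0].
  by rewrite -[0 in LHS](mulr0n 1) f_pos // mulr0n mul0r.
rewrite horner0_derivn2 -horner0_even_quot.
rewrite (lagrange_horner0 n_gt0 (sq_node_inj h_neq0) (size_even_quot sP)).
rewrite big_add1 big_mkord /= mulr_sumr -sumrMnl; apply: eq_bigr => i _.
rewrite prod_sq_node_lagrange0 // f_pos // f_neg // f_zero.
rewrite second_diff_even_quot -/(sq_node h i) /alpha2 /sq_node.
by field; rewrite pi_coef_neq0 nat1r pnatr_eq0 h_neq0.
Qed.
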